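(* Let $\varepsilon>0$ and let $(X,d)$ be a compact length space with closed measurement set $S\subset X$ such that $\mathcal R_{X,S}$ is a topological embedding. The following are equivalent: (1) $(X,d)$ with $S$ is $\mathrm{BLIE}_\varepsilon$; (2) $(X,d)$ with $S$ is $\mathrm{FLIE}_\varepsilon$ and $(\mathcal R_{X,S}(X),\|\cdot\|_\infty)$ satisfies the $\varepsilon$-local midpoint property; (3) $(X,d)$ with $S$ is $\mathrm{FLIE}_{\varepsilon_0}$ for some $\varepsilon_0\in(0,\varepsilon)$ and $(\mathcal R_{X,S}(X),\|\cdot\|_\infty)$ satisfies the $\varepsilon$-local midpoint property.
   Context: $\mathcal R_{X,S}\colon(X,d)\to(C(S),\|\cdot\|_\infty)$, $\mathcal R_{X,S}(p)(z)=d(p,z)$. A continuous map is an $\varepsilon$-local isometry if it preserves distances between points at distance $<\varepsilon$. $\mathrm{FLIE}_\varepsilon$: $\mathcal R_{X,S}$ is a topological embedding and an $\varepsilon$-local isometry. $\mathrm{BLIE}_\varepsilon$: $\mathcal R_{X,S}$ is a topological embedding and $\mathcal R_{X,S}^{-1}\colon(\mathcal R_{X,S}(X),\|\cdot\|_\infty)\to(X,d)$ is an $\varepsilon$-local isometry. A metric space $(Y,\rho)$ satisfies the $\varepsilon$-local midpoint property if for all $x,y\in Y$ with $\rho(x,y)<\varepsilon$ there is $m\in Y$ with $\rho(m,x)=\rho(m,y)=\tfrac12\rho(x,y)$. *)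

From Stdlib Require Import Reals Lra List Sorted.
From Coquelicot Require Import Coquelicot.
Open Scope R_scope.

Section Defs.
Context {X : Type} (d : X -> X -> R).

Definition is_metric : Prop :=
  (forall x y, 0 <= d x y) /\
  (forall x y, d x y = 0 <-> x = y) /\
  (forall x y, d x y = d y x) /\
  (forall x y z, d x z <= d x y + d y z).

Definition d_open (U : X -> Prop) : Prop :=
  forall x, U x -> exists r, 0 < r /\ forall y, d x y < r -> U y.

Definition d_closed (S : X -> Prop) : Prop := d_open (fun x => ~ S x).

Definition d_compact : Prop :=
  forall (I : Type) (U : I -> X -> Prop),
    (forall i, d_open (U i)) -> (forall x, exists i, U i x) ->
    exists l : list I, forall x, exists i, In i l /\ U i x.

(* continuous curves [0,1] -> X (a curve is any g : R -> X, only its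
   restriction to [0,1] matters) *)
Definition curve_continuous (g : R -> X) : Prop :=
  forall t, 0 <= t <= 1 -> forall e, 0 < e -> exists del, 0 < del /\
    forall s, 0 <= s <= 1 -> Rabs (s - t) < del -> d (g s) (g t) < e.

Definition is_path (g : R -> X) (x y : X) : Prop :=
  curve_continuous g /\ g 0 = x /\ g 1 = y.

Definition is_partition (l : list R) : Prop :=
  Sorted Rle l /\ hd 1 l = 0 /\ last l 0 = 1.

Fixpoint poly_sum (g : R -> X) (l : list R) : R :=
  match l with
  | t :: ((s :: _) as l') => d (g t) (g s) + poly_sum g l'
  | _ => 0
  end.

Definition curve_length (g : R -> X) : Rbar :=
  Lub_Rbar (fun s => exists l, is_partition l /\ s = poly_sum g l).

Definition length_space : Prop :=
  forall x y, Rbar_is_glb (fun L => exists g, is_path g x y /\ L = curve_length g)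
                          (Finite (d x y)).

Variable S : X -> Prop.

(* R_{X,S}(p) = d(p, .) restricted to S, as an element of C(S) *)
Definition RXS (p : X) : X -> R := fun z => d p z.

(* sup-norm distance in C(S) (sup over the empty set taken as 0) *)
Definition sup_dist (f g : X -> R) : R :=
  real (Lub_Rbar (fun t => exists z, S z /\ t = Rabs (f z - g z))).

Definition rdist (p q : X) : R := sup_dist (RXS p) (RXS q).

(* R_{X,S} is a topological embedding: continuous, injective (as maps into
   C(S), i.e. up to equality on S) and with continuous inverse on its image *)
Definition R_embedding : Prop :=
  (forall p e, 0 < e -> exists del, 0 < del /\
     forall q, d p q < del -> rdist p q < e) /\
  (forall p q, (forall z, S z -> RXS p z = RXS q z) -> p = q) /\
  (forall p e, 0 < e -> exists del, 0 < del /\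
     forall q, rdist p q < del -> d p q < e).

Definition FLIE (eps : R) : Prop :=
  R_embedding /\ forall p q, d p q < eps -> rdist p q = d p q.

(* BLIE_eps: embedding and R_{X,S}^{-1} is an eps-local isometry
   (points of the image are R p, R q and R^{-1}(R p) = p) *)
Definition BLIE (eps : R) : Prop :=
  R_embedding /\ forall p q, rdist p q < eps -> d p q = rdist p q.

Definition image_local_midpoint (eps : R) : Prop :=
  forall p q, rdist p q < eps -> exists m,
    rdist m p = rdist p q / 2 /\ rdist m q = rdist p q / 2.

End Defs.

(* Since R_{X,S} is 1-Lipschitz, BLIE_eps already gives FLIE_eps.  A compact
   length space has exact midpoints (intermediate value theorem along almost
   shortest paths, plus compactness), and BLIE_eps carries them to midpoints
   in the image.  Conversely, compactness makes the inverse of R_{X,S}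
   uniformly continuous, so there is eta > 0 with d = rdist whenever
   rdist < eta (from FLIE_eps0).  Bisecting with image midpoints and using
   the triangle inequality for d, the inequality d <= rdist propagates from
   the scale eta to all scales eta 2^n, i.e. up to eps. *)

From Stdlib Require Import Reals Lra List Sorted Classical.
From Coquelicot Require Import Coquelicot.
Open Scope R_scope.

Section Rdist.
Context {X : Type} (d : X -> X -> R) (S : X -> Prop).
Hypothesis d_metric : is_metric d.

Lemma dist_sub_le x y z : Rabs (d x z - d y z) <= d x y.
Proof.
  destruct d_metric as (_ & _ & Hsym & Htri).
  pose proof (Htri x y z); pose proof (Htri y x z); rewrite (Hsym y x) in *.
  apply Rabs_le; lra.
Qed.

Lemma rdist_ub p q z : S z -> Rabs (d p z - d q z) <= rdist d S p q.
Proof.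
  intro Hz; unfold rdist, sup_dist, RXS.
  set (E := fun t => exists z, S z /\ t = Rabs (d p z - d q z)).
  destruct (Lub_Rbar_correct E) as [Hub Hlub].
  pose proof (Hub _ (ex_intro _ z (conj Hz eq_refl))) as Hz'.
  assert (Hbnd : Rbar_le (Lub_Rbar E) (d p q)).
  { apply Hlub; intros t [w [_ ->]]; apply dist_sub_le. }
  destruct (Lub_Rbar E); simpl in *; tauto.
Qed.

Lemma rdist_lub p q B :
  0 <= B -> (forall z, S z -> Rabs (d p z - d q z) <= B) -> rdist d S p q <= B.
Proof.
  intros HB Hall; unfold rdist, sup_dist, RXS.
  set (E := fun t => exists z, S z /\ t = Rabs (d p z - d q z)).
  destruct (Lub_Rbar_correct E) as [_ Hlub].
  assert (Hbnd : Rbar_le (Lub_Rbar E) B) by (apply Hlub; intros t [w [Hw ->]]; simpl; auto).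
  destruct (Lub_Rbar E); simpl in *; tauto.
Qed.

(* If S is empty the supremum is [m_infty], whose [real] part is 0. *)
Lemma rdist_ge0 p q : 0 <= rdist d S p q.
Proof.
  destruct (classic (exists z, S z)) as [[z Hz] | Hempty].
  - exact (Rle_trans _ _ _ (Rabs_pos _) (rdist_ub p q z Hz)).
  - unfold rdist, sup_dist, RXS.
    set (E := fun t => exists z, S z /\ t = Rabs (d p z - d q z)).
    destruct (Lub_Rbar_correct E) as [_ Hlub].
    assert (Hbnd : Rbar_le (Lub_Rbar E) m_infty)
      by (apply Hlub; intros t [w [Hw _]]; exfalso; eauto).
    destruct (Lub_Rbar E); simpl in *; try tauto; lra.
Qed.

Lemma rdist_le_dist p q : rdist d S p q <= d p q.
Proof. apply rdist_lub; [apply d_metric | intros; apply dist_sub_le]. Qed.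

Lemma rdist_refl p : rdist d S p p = 0.
Proof.
  apply Rle_antisym; [| apply rdist_ge0].
  rewrite <- (proj2 (proj1 (proj2 d_metric) p p) eq_refl); apply rdist_le_dist.
Qed.

Lemma rdist_sym p q : rdist d S p q = rdist d S q p.
Proof.
  apply Rle_antisym; apply rdist_lub; try apply rdist_ge0;
    intros z Hz; rewrite Rabs_minus_sym; apply rdist_ub; auto.
Qed.

Lemma rdist_triangle p q r : rdist d S p r <= rdist d S p q + rdist d S q r.
Proof.
  apply rdist_lub.
  - pose proof (rdist_ge0 p q); pose proof (rdist_ge0 q r); lra.
  - intros z Hz; pose proof (rdist_ub p q z Hz); pose proof (rdist_ub q r z Hz).
    replace (d p z - d r z) with ((d p z - d q z) + (d q z - d r z)) by ring.
    eapply Rle_trans; [apply Rabs_triang | lra].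
Qed.

End Rdist.

Lemma list_min_pos {I : Type} (r : I -> R) (l : list I) :
  (forall i, 0 < r i) -> exists eta, 0 < eta /\ forall i, In i l -> eta <= r i.
Proof.
  intro Hpos; induction l as [| j l [eta [Heta Hle]]].
  - exists 1; split; [lra | intros i []].
  - exists (Rmin (r j) eta); split; [apply Rmin_glb_lt; auto |].
    intros i [<- | Hi]; [apply Rmin_l | eapply Rle_trans; [apply Rmin_r | auto]].
Qed.

Lemma exists_pow2_gt a eta : 0 < eta -> exists n, a < eta * 2 ^ n.
Proof.
  intro Heta.
  destruct (Pow_x_infinity 2 ltac:(rewrite Rabs_pos_eq; lra) (a / eta + 1)) as [n Hn].
  exists n; specialize (Hn n (le_n n)).
  rewrite Rabs_pos_eq in Hn by (apply pow_le; lra).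
  apply (Rmult_lt_reg_l (/ eta)); [apply Rinv_0_lt_compat; lra |].
  replace (/ eta * (eta * 2 ^ n)) with (2 ^ n) by (field; lra).
  unfold Rdiv in Hn; lra.
Qed.

Section Compact.
Context {X : Type} (d : X -> X -> R).
Hypothesis d_metric : is_metric d.
Hypothesis d_cpt : d_compact d.

Lemma compact_lipschitz_pos_lb (F : X -> R) (L : R) :
  0 <= L -> (forall m m', F m - F m' <= L * d m m') -> (forall m, 0 < F m) ->
  exists c, 0 < c /\ forall m, c <= F m.
Proof.
  intros HL Hlip Hpos.
  set (U := fun (c : {c : R | 0 < c}) m => proj1_sig c < F m).
  destruct (d_cpt _ U) as [l Hsub].
  - intros [c Hc] m Hm; unfold U in *; simpl in *.
    exists ((F m - c) / (L + 1)); split; [apply Rdiv_lt_0_compat; lra |].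
    intros y Hy; pose proof (Hlip m y).
    assert (L * d m y <= L * ((F m - c) / (L + 1))) by (apply Rmult_le_compat_l; lra).
    assert (L * ((F m - c) / (L + 1)) < F m - c).
    { apply (Rmult_lt_reg_r (L + 1)); [lra |].
      replace (L * ((F m - c) / (L + 1)) * (L + 1)) with (L * (F m - c)) by (field; lra).
      replace ((F m - c) * (L + 1)) with (L * (F m - c) + (F m - c)) by ring; lra. }
    lra.
  - intro m; pose proof (Hpos m) as Hm.
    assert (Hhalf : 0 < F m / 2) by lra.
    exists (exist _ _ Hhalf); unfold U; simpl; lra.
  - destruct (list_min_pos (fun c : {c : R | 0 < c} => proj1_sig c) l
                (fun c => proj2_sig c)) as [c [Hc Hle]].
    exists c; split; auto; intro m.
    destruct (Hsub m) as [i [Hi Hm]]; specialize (Hle i Hi); unfold U in Hm; lra.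
Qed.

(* The finite subcover is taken among the rdist-balls of radius del_p / 2
   given by continuity of the inverse at p; half of the least radius works. *)
Lemma R_embedding_inverse_uniform (S : X -> Prop) e :
  R_embedding d S -> 0 < e ->
  exists eta, 0 < eta /\ forall x y, rdist d S x y < eta -> d x y < e.
Proof.
  intros (_ & _ & Hinv) He.
  set (I := {p : X & {del : R | 0 < del /\
                       forall q, rdist d S p q < del -> d p q < e / 2}}).
  set (ctr := fun i : I => projT1 i).
  set (rad := fun i : I => proj1_sig (projT2 i)).
  set (U := fun (i : I) y => rdist d S (ctr i) y < rad i / 2).
  destruct (d_cpt I U) as [l Hsub].
  - intros i y Hy; unfold U in *.
    exists (rad i / 2 - rdist d S (ctr i) y); split; [lra |]; intros y' Hy'.
    pose proof (rdist_triangle d S d_metric (ctr i) y y').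
    pose proof (rdist_le_dist d S d_metric y y'); lra.
  - intro x; destruct (Hinv x (e / 2)) as [del [Hdel Hq]]; [lra |].
    exists (existT _ x (exist _ del (conj Hdel Hq))).
    unfold U, ctr, rad; simpl; rewrite rdist_refl; auto; lra.
  - destruct (list_min_pos (fun i => rad i / 2) l
                (fun i => ltac:(pose proof (proj1 (proj2_sig (projT2 i))); unfold rad; lra)))
      as [eta [Heta Hle]].
    exists eta; split; auto; intros x y Hxy.
    destruct (Hsub x) as [i [Hi Hx]]; specialize (Hle i Hi); unfold U in Hx.
    destruct i as [p [del [Hdel Hq]]]; unfold ctr, rad in *; simpl in *.
    pose proof (rdist_triangle d S d_metric p x y).
    assert (Hpx := Hq x ltac:(lra)); assert (Hpy := Hq y ltac:(lra)).
    destruct d_metric as (_ & _ & Hsym & Htri).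
    pose proof (Htri x p y); rewrite (Hsym p x) in Hpx; lra.
Qed.

End Compact.

Lemma FLIE_midpoint_BLIE {X : Type} (d : X -> X -> R) (S : X -> Prop) eps eps0 :
  is_metric d -> d_compact d -> 0 < eps0 ->
  FLIE d S eps0 -> image_local_midpoint d S eps -> BLIE d S eps.
Proof.
  intros Hm Hc Heps0 [Hemb Hiso] Hmid; split; auto.
  destruct (R_embedding_inverse_uniform d Hm Hc S eps0 Hemb Heps0) as [eta [Heta Hunif]].
  assert (Hscale : forall n x y, rdist d S x y < eps -> rdist d S x y < eta * 2 ^ n ->
                    d x y <= rdist d S x y).
  { induction n as [| n IH]; intros x y Heps Hn; simpl in Hn.
    - right; symmetry; apply Hiso, Hunif; lra.
    - destruct (Hmid x y Heps) as [m [Hmx Hmy]].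
      pose proof (rdist_ge0 d S Hm x y).
      assert (Hxm : d x m <= rdist d S x m)
        by (apply IH; rewrite (rdist_sym d S Hm x m), Hmx; lra).
      assert (Hmy' : d m y <= rdist d S m y) by (apply IH; rewrite Hmy; lra).
      rewrite (rdist_sym d S Hm x m) in Hxm.
      destruct Hm as (_ & _ & _ & Htri); pose proof (Htri x m y); lra. }
  intros p q Hpq; apply Rle_antisym; [| apply rdist_le_dist; auto].
  destruct (exists_pow2_gt (rdist d S p q) eta Heta) as [n Hn].
  exact (Hscale n p q Hpq Hn).
Qed.

Definition clamp01 (t : R) : R := Rmax 0 (Rmin 1 t).

Lemma clamp01_in t : 0 <= clamp01 t <= 1.
Proof. unfold clamp01, Rmax, Rmin; repeat destruct Rle_dec; lra. Qed.

Lemma clamp01_id t : 0 <= t <= 1 -> clamp01 t = t.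
Proof. unfold clamp01, Rmax, Rmin; repeat destruct Rle_dec; lra. Qed.

Lemma clamp01_lipschitz s t : Rabs (clamp01 s - clamp01 t) <= Rabs (s - t).
Proof.
  unfold clamp01, Rmax, Rmin; repeat destruct Rle_dec; apply Rabs_le; split_Rabs; lra.
Qed.

Section Midpoint.
Context {X : Type} (d : X -> X -> R).
Hypothesis d_metric : is_metric d.

Lemma path_length_ge_two_steps g x y t :
  is_path d g x y -> 0 <= t <= 1 ->
  Rbar_le (d x (g t) + d (g t) y) (curve_length d g).
Proof.
  intros (_ & Hg0 & Hg1) Ht.
  assert (Hpart : is_partition (0 :: t :: 1 :: nil)).
  { split; [| split; reflexivity].
    repeat apply Sorted_cons; auto; apply HdRel_cons; lra. }
  destruct (Lub_Rbar_correct (fun s => exists l, is_partition l /\ s = poly_sum d g l))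
    as [Hub _].
  pose proof (Hub _ (ex_intro _ _ (conj Hpart eq_refl))) as Hsum.
  simpl in Hsum; rewrite Hg0, Hg1, Rplus_0_r in Hsum; exact Hsum.
Qed.

Lemma path_dist_crosses_half g x y :
  is_path d g x y -> 0 < d x y -> exists t, 0 <= t <= 1 /\ d x (g t) = d x y / 2.
Proof.
  intros (Hg & Hg0 & Hg1) Hxy.
  destruct d_metric as (_ & Hid & Hsym & Htri).
  set (f := fun t => d x (g (clamp01 t)) - d x y / 2).
  assert (Hf : continuity f).
  { intros a e He.
    destruct (Hg (clamp01 a) (clamp01_in a) e He) as [del [Hdel Hclose]].
    exists del; split; auto; intros t [_ Hta]; simpl in *; unfold Rdist in *.
    assert (Hgt := Hclose (clamp01 t) (clamp01_in t)
                     ltac:(pose proof (clamp01_lipschitz t a); lra)).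
    pose proof (dist_sub_le d d_metric (g (clamp01 t)) (g (clamp01 a)) x).
    unfold f; rewrite (Hsym x (g (clamp01 t))), (Hsym x (g (clamp01 a))).
    replace (d (g (clamp01 t)) x - d x y / 2 - (d (g (clamp01 a)) x - d x y / 2))
      with (d (g (clamp01 t)) x - d (g (clamp01 a)) x) by ring; lra. }
  destruct (IVT f 0 1 Hf ltac:(lra)) as [t [Ht Hft]].
  - unfold f; rewrite clamp01_id, Hg0, (proj2 (Hid x x) eq_refl) by lra; lra.
  - unfold f; rewrite clamp01_id, Hg1 by lra; lra.
  - exists t; split; auto; unfold f in Hft; rewrite clamp01_id in Hft by lra; lra.
Qed.

Hypothesis d_length : length_space d.

Lemma length_space_approx_midpoint x y e : 0 < e -> exists m,
  Rabs (d x m - d x y / 2) + Rabs (d m y - d x y / 2) < e.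
Proof.
  intro He; destruct d_metric as (Hpos & Hid & Hsym & Htri).
  destruct (Req_dec (d x y) 0) as [H0 | H0].
  { exists x; rewrite (proj2 (Hid x x) eq_refl), H0.
    replace (0 - 0 / 2) with 0 by field; rewrite Rabs_R0; lra. }
  assert (Hxy : 0 < d x y) by (pose proof (Hpos x y); lra).
  destruct (d_length x y) as [_ Hglb].
  assert (exists g, is_path d g x y /\ Rbar_lt (curve_length d g) (d x y + e))
    as [g [Hg Hlen]].
  { apply NNPP; intro Hnone.
    assert (Rbar_le (d x y + e) (d x y)).
    { apply Hglb; intros L [g [Hg ->]].
      destruct (Rbar_le_lt_dec (d x y + e) (curve_length d g)); auto.
      exfalso; eauto. }
    simpl in *; lra. }
  destruct (path_dist_crosses_half g x y Hg Hxy) as [t [Ht Hhalf]].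
  pose proof (Rbar_le_lt_trans _ _ _ (path_length_ge_two_steps g x y t Hg Ht) Hlen)
    as Hshort.
  simpl in Hshort.
  exists (g t); rewrite Hhalf, Rminus_diag, Rabs_R0, Rplus_0_l.
  pose proof (Htri x (g t) y); rewrite Rabs_right; lra.
Qed.

Hypothesis d_cpt : d_compact d.

Lemma compact_length_space_midpoint x y :
  exists m, d x m = d x y / 2 /\ d m y = d x y / 2.
Proof.
  set (F := fun m => Rabs (d x m - d x y / 2) + Rabs (d m y - d x y / 2)).
  destruct (classic (exists m, F m = 0)) as [[m Hm] | Hnone].
  { exists m; unfold F in Hm.
    pose proof (Rabs_pos (d x m - d x y / 2)); pose proof (Rabs_pos (d m y - d x y / 2)).
    split; apply Rminus_diag_uniq, Rabs_eq_0; lra. }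
  exfalso.
  assert (Fpos : forall m, 0 < F m).
  { intro m; assert (F m <> 0) by (intro; apply Hnone; eauto).
    unfold F in *; pose proof (Rabs_pos (d x m - d x y / 2));
      pose proof (Rabs_pos (d m y - d x y / 2)); lra. }
  assert (Flip : forall m m', F m - F m' <= 2 * d m m').
  { intros m m'; unfold F.
    pose proof (dist_sub_le d d_metric m m' y).
    pose proof (dist_sub_le d d_metric m' m x).
    destruct d_metric as (_ & _ & Hsym & _).
    rewrite (Hsym m' m), (Hsym m' x), (Hsym m x) in *.
    split_Rabs; lra. }
  destruct (compact_lipschitz_pos_lb d d_cpt F 2 ltac:(lra) Flip Fpos) as [c [Hc Hlb]].
  destruct (length_space_approx_midpoint x y c Hc) as [m Hm].
  specialize (Hlb m); unfold F in Hlb; lra.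
Qed.

End Midpoint.

Lemma BLIE_FLIE {X : Type} (d : X -> X -> R) (S : X -> Prop) eps :
  is_metric d -> BLIE d S eps -> FLIE d S eps.
Proof.
  intros Hm [Hemb Hinv]; split; auto; intros p q Hpq.
  pose proof (rdist_le_dist d S Hm p q); symmetry; apply Hinv; lra.
Qed.

Lemma BLIE_image_local_midpoint {X : Type} (d : X -> X -> R) (S : X -> Prop) eps :
  is_metric d -> d_compact d -> length_space d ->
  BLIE d S eps -> image_local_midpoint d S eps.
Proof.
  intros Hm Hc Hl [_ Hinv] p q Hpq.
  pose proof (Hinv p q Hpq) as Hdist.
  destruct (compact_length_space_midpoint d Hm Hl Hc p q) as [m [Hpm Hmq]].
  pose proof (rdist_le_dist d S Hm m p) as Hmp.
  pose proof (rdist_le_dist d S Hm m q) as Hmq'.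
  pose proof (rdist_ge0 d S Hm p q).
  destruct Hm as (_ & _ & Hsym & _).
  rewrite (Hsym m p), Hpm, Hdist in Hmp; rewrite Hmq, Hdist in Hmq'.
  exists m; rewrite <- Hdist; split.
  - rewrite <- Hpm, (Hsym p m); symmetry; apply Hinv; lra.
  - rewrite <- Hmq; symmetry; apply Hinv; lra.
Qed.

Theorem mainTheorem10 (X : Type) (d : X -> X -> R) (S : X -> Prop) (eps : R) :
  0 < eps -> is_metric d -> d_compact d -> length_space d ->
  d_closed d S -> R_embedding d S ->
  (BLIE d S eps <-> FLIE d S eps /\ image_local_midpoint d S eps) /\
  (FLIE d S eps /\ image_local_midpoint d S eps <->
     (exists eps0, 0 < eps0 < eps /\ FLIE d S eps0) /\ image_local_midpoint d S eps).
Proof.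
  intros Heps Hm Hc Hl _ _; split; split.
  - intro HB; split; [apply BLIE_FLIE | apply BLIE_image_local_midpoint]; auto.
  - intros [HF Hmid]; exact (FLIE_midpoint_BLIE d S eps eps Hm Hc Heps HF Hmid).
  - intros [[Hemb Hiso] Hmid]; split; auto.
    exists (eps / 2); split; [lra |]; split; auto.
    intros p q Hpq; apply Hiso; lra.
  - intros [[eps0 [Heps0 HF]] Hmid]; split; auto.
    apply BLIE_FLIE; auto; exact (FLIE_midpoint_BLIE d S eps eps0 Hm Hc (proj1 Heps0) HF Hmid).
Qed.
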